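(* Let $X_1,\dots,X_n$ be the $x$-slices of a tensor $T\in\overline{\mathrm{OT}_n(\mathbb{C})}$. Then the $n^2$ matrices $X_k^TX_l$ ($1\le k,l\le n$) are symmetric and approximately simultaneously diagonalizable, and likewise the $n^2$ matrices $X_kX_l^T$ are symmetric and approximately simultaneously diagonalizable. The same holds for the $y$-slices and for the $z$-slices.
   Context: Associate to $T$ the trilinear form $t=\sum_{i,j,k}T_{ijk}x_iy_jz_k$. $\mathrm{OT}_n(\mathbb{C})$ is the set of tensors whose trilinear form can be written $g(Ax,By,Cz)$ with $A,B,C$ complex orthogonal ($A^TA=\mathrm{Id}$) and $g=\sum_i\alpha_ix_iy_iz_i$; closure is in the Euclidean topology. Slices: $X_k=(T_{kjl})_{j,l}$, $Y_k=(T_{ikl})_{i,l}$, $Z_k=(T_{ijk})_{i,j}$. A tuple $(M_1,\dots,M_m)$ of matrices in $M_n(\mathbb{C})$ is approximately simultaneously diagonalizable if for every $\epsilon>0$ there are simultaneously diagonalizable $B_1,\dots,B_m$ with $\|M_i-B_i\|<\epsilon$ for all $i$. *)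

(* Complex numbers are modelled by an arbitrary
   numClosedFieldType C (C itself is such a field); the Euclidean topology
   is expressed through the norm `|_| of C, entrywise. *)
From HB Require Import structures.
From mathcomp Require Import all_boot all_order all_algebra.
Set Implicit Arguments. Unset Strict Implicit. Unset Printing Implicit Defensive.
Import Order.TTheory GRing.Theory Num.Theory.
Local Open Scope ring_scope.

Definition tensor (C : numClosedFieldType) (n : nat) := 'I_n -> 'I_n -> 'I_n -> C.

Definition trilin (C : numClosedFieldType) n (T : tensor C n)
  (x y z : 'cV[C]_n) : C :=
  \sum_(i < n) \sum_(j < n) \sum_(k < n) T i j k * x i 0 * y j 0 * z k 0.

Definition diag_form (C : numClosedFieldType) n (alpha : 'I_n -> C)
  (x y z : 'cV[C]_n) : C :=
  \sum_(i < n) alpha i * x i 0 * y i 0 * z i 0.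

Definition orthogonal_mx (C : numClosedFieldType) n (A : 'M[C]_n) : Prop :=
  A^T *m A = 1%:M.

Definition OT (C : numClosedFieldType) n (T : tensor C n) : Prop :=
  exists (A B D : 'M[C]_n) (alpha : 'I_n -> C),
    [/\ orthogonal_mx A, orthogonal_mx B, orthogonal_mx D &
      forall x y z : 'cV[C]_n,
        trilin T x y z = diag_form alpha (A *m x) (B *m y) (D *m z)].

(* Euclidean closure of OT_n(C) (entrywise sup-norm; all norms equivalent). *)
Definition OT_closure (C : numClosedFieldType) n (T : tensor C n) : Prop :=
  forall eps : C, 0 < eps ->
    exists T' : tensor C n, OT T' /\
      forall i j k, `|T i j k - T' i j k| < eps.

Definition xslice (C : numClosedFieldType) n (T : tensor C n) (k : 'I_n) : 'M[C]_n :=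
  \matrix_(j, l) T k j l.
Definition yslice (C : numClosedFieldType) n (T : tensor C n) (k : 'I_n) : 'M[C]_n :=
  \matrix_(i, l) T i k l.
Definition zslice (C : numClosedFieldType) n (T : tensor C n) (k : 'I_n) : 'M[C]_n :=
  \matrix_(i, j) T i j k.

Definition sim_diag (C : numClosedFieldType) n (I : finType) (B : I -> 'M[C]_n) : Prop :=
  exists P : 'M[C]_n, P \in unitmx /\
    forall i, is_diag_mx (invmx P *m B i *m P).

Definition approx_sim_diag (C : numClosedFieldType) n (I : finType)
  (M : I -> 'M[C]_n) : Prop :=
  forall eps : C, 0 < eps ->
    exists B : I -> 'M[C]_n, sim_diag B /\
      forall i a b, `|M i a b - B i a b| < eps.

Definition slices_property (C : numClosedFieldType) n (S : 'I_n -> 'M[C]_n) : Prop :=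
  [/\ forall k l, ((S k)^T *m S l)^T = (S k)^T *m S l,
      approx_sim_diag (fun p : 'I_n * 'I_n => (S p.1)^T *m S p.2),
      forall k l, (S k *m (S l)^T)^T = S k *m (S l)^T &
      approx_sim_diag (fun p : 'I_n * 'I_n => S p.1 *m (S p.2)^T)].

(* Call a family (S_k) of square matrices orthogonally diagonal
   if S_k = P^T diag(c_k) Q for fixed orthogonal P, Q.  For such a family the
   Gram products S_k^T S_l = Q^T diag(c_k c_l) Q are all conjugated to
   diagonal matrices by the same orthogonal Q, hence are symmetric and
   simultaneously diagonalizable; the family (S_k^T) is again orthogonally
   diagonal, which handles the products S_k S_l^T.  Both properties pass to
   entrywise limits: symmetry is a closed condition, and "approximately
   simultaneously diagonalizable" is by definition closed, while matrix
   multiplication is uniformly continuous on bounded sets.  Finally, every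
   slice family of a tensor in OT_n(C) is orthogonally diagonal (the slices
   of sum_r alpha_r a_r (x) b_r (x) d_r are read off coefficientwise), and
   slice entries are tensor entries, so the slice families of a tensor in the
   closure are limits of orthogonally diagonal families. *)
From HB Require Import structures.
From mathcomp Require Import all_boot all_order all_algebra.
From mathcomp Require Import ring.
Set Implicit Arguments. Unset Strict Implicit. Unset Printing Implicit Defensive.
Import Order.TTheory GRing.Theory Num.Theory.
Local Open Scope ring_scope.

Section OrthogonalDiagonalFamilies.
Variable C : numClosedFieldType.

Lemma orthogonal_mx_tr n (U : 'M[C]_n) : orthogonal_mx U -> U *m U^T = 1%:M.
Proof. exact: mulmx1C. Qed.

Definition odiag_family n (I : Type) (S : I -> 'M[C]_n) : Prop :=
  exists (P Q : 'M[C]_n) (c : I -> 'rV[C]_n),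
    [/\ orthogonal_mx P, orthogonal_mx Q & forall k, S k = P^T *m diag_mx (c k) *m Q].

Definition gram n (I : Type) (S : I -> 'M[C]_n) (p : I * I) : 'M[C]_n :=
  (S p.1)^T *m S p.2.

(* Transposing exchanges the roles of P and Q. *)
Lemma odiag_family_tr n (I : Type) (S : I -> 'M[C]_n) :
  odiag_family S -> odiag_family (fun k => (S k)^T).
Proof.
move=> [P [Q [c [HP HQ HS]]]]; exists Q, P, c; split => // k.
by rewrite HS !trmx_mul trmxK tr_diag_mx mulmxA.
Qed.

Lemma orth_conj_diag n (I : finType) (U : 'M[C]_n) (d : I -> 'rV[C]_n) :
  orthogonal_mx U ->
  (forall p, (U^T *m diag_mx (d p) *m U)^T = U^T *m diag_mx (d p) *m U) /\
  sim_diag (fun p => U^T *m diag_mx (d p) *m U).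
Proof.
move=> HU; split => [p|].
  by rewrite !trmx_mul trmxK tr_diag_mx mulmxA.
have [_ Uunit] := mulmx1_unit HU.
have invU : invmx U^T = U.
  transitivity (invmx U^T *m (U^T *m U)); first by rewrite HU mulmx1.
  by rewrite mulmxA mulVmx ?unitmx_tr // mul1mx.
exists U^T; split => [|p]; first by rewrite unitmx_tr.
rewrite invU !mulmxA (orthogonal_mx_tr HU) mul1mx -mulmxA (orthogonal_mx_tr HU).
by rewrite mulmx1 diag_mx_is_diag.
Qed.

(* The Gram products of P^T diag(c_k) Q are Q^T diag(c_k c_l) Q. *)
Lemma odiag_gram n (I : finType) (S : I -> 'M[C]_n) :
  odiag_family S ->
  exists (Q : 'M[C]_n) (d : I * I -> 'rV[C]_n),
    orthogonal_mx Q /\ forall p, gram S p = Q^T *m diag_mx (d p) *m Q.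
Proof.
move=> [P [Q [c [HP HQ HS]]]].
exists Q, (fun p => \row_j (c p.1 0 j * c p.2 0 j)); split => // -[k l].
rewrite /gram !HS !trmx_mul trmxK tr_diag_mx !mulmxA.
rewrite -[Q^T *m _ *m P *m P^T]mulmxA (orthogonal_mx_tr HP) mulmx1.
by rewrite -[Q^T *m _ *m diag_mx _]mulmxA mulmx_diag.
Qed.

Lemma odiag_gram_sym_sim_diag n (I : finType) (S : I -> 'M[C]_n) :
  odiag_family S -> (forall p, (gram S p)^T = gram S p) /\ sim_diag (gram S).
Proof.
move=> /odiag_gram [Q [d [HQ Hd]]].
have [Hsym [P [Punit Pdiag]]] := orth_conj_diag d HQ.
by split => [p|]; [rewrite Hd | exists P; split => // p; rewrite Hd].
Qed.

End OrthogonalDiagonalFamilies.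

Section EntrywiseLimits.
Variable C : numClosedFieldType.

Lemma norm_le_sum (I : finType) (F : I -> C) i : `|F i| <= \sum_j `|F j|.
Proof. by rewrite (bigD1 i) //= lerDl sumr_ge0. Qed.

Lemma choose_tolerance (c eps : C) : 0 <= c -> 0 < eps ->
  exists d, [/\ 0 < d, d <= 1 & d * c < eps].
Proof.
move=> c0 e0.
have c1 : 0 < c + 1 by rewrite ltr_wpDl.
have cc : c < c + 1 by rewrite ltrDl ltr01.
case: (boolP (eps <= c + 1)) => he.
  exists (eps / (c + 1)); split.
  - exact: divr_gt0.
  - by rewrite ler_pdivrMr // mul1r.
  - by rewrite mulrAC ltr_pdivrMr // ltr_pM2l.
exists 1; split => //; rewrite mul1r.
by apply: lt_trans cc _; rewrite real_ltNge ?gtr0_real.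
Qed.

Lemma mul_close (K d u v u' v' : C) : 0 <= K -> 0 <= d -> d <= 1 ->
  `|u| <= K -> `|v| <= K -> `|u - u'| < d -> `|v - v'| < d ->
  `|u * v - u' * v'| <= d * (K * 2 + 1).
Proof.
move=> K0 d0 d1 hu hv huu hvv.
have -> : u * v - u' * v' = u * (v - v') + (u - u') * v' by ring.
apply: le_trans (ler_normD _ _) _; rewrite !normrM.
have hv' : `|v'| <= K + 1.
  have -> : v' = v - (v - v') by ring.
  apply: le_trans (ler_normB _ _) _.
  by rewrite lerD // (le_trans (ltW hvv)).
have h1 : `|u| * `|v - v'| <= K * d by rewrite ler_pM // ltW.
have h2 : `|u - u'| * `|v'| <= d * (K + 1) by rewrite ler_pM // ltW.
apply: le_trans (lerD h1 h2) _.
by rewrite le_eqVlt; apply/orP; left; apply/eqP; ring.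
Qed.

Lemma mulmx_close m p q (K d : C) (A A' : 'M[C]_(p, m)) (B B' : 'M[C]_(m, q)) :
  0 <= K -> 0 <= d -> d <= 1 ->
  (forall i j, `|A i j| <= K) -> (forall i j, `|B i j| <= K) ->
  (forall i j, `|A i j - A' i j| < d) -> (forall i j, `|B i j - B' i j| < d) ->
  forall a b, `|(A *m B) a b - (A' *m B') a b| <= m%:R * (d * (K * 2 + 1)).
Proof.
move=> K0 d0 d1 hA hB hAA hBB a b; rewrite !mxE -sumrB.
apply: le_trans (ler_norm_sum _ _ _) _.
apply: le_trans (ler_sum _ (G := fun _ => d * (K * 2 + 1)) _) _.
  by move=> j _; apply: mul_close.
by rewrite sumr_const card_ord mulr_natl.
Qed.

Lemma sym_of_limit n (M : 'M[C]_n) :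
  (forall eps : C, 0 < eps -> exists M' : 'M[C]_n,
     M'^T = M' /\ forall a b, `|M a b - M' a b| < eps) ->
  M^T = M.
Proof.
move=> H; apply/matrixP => a b; rewrite mxE.
apply/eqP; rewrite -subr_eq0; apply/negPn/negP => hne.
set x := M b a - M a b.
have hx : 0 < `|x| by rewrite normr_gt0.
have [M' [hs hM]] := H (`|x| / 2) (divr_gt0 hx (ltr0Sn _ 1)).
have sym' : M' b a = M' a b by rewrite -[in LHS]hs mxE.
have : `|x| < `|x| / 2 + `|x| / 2.
  have split_x : x = (M b a - M' b a) + (M' a b - M a b).
    by rewrite sym' addrA subrK.
  rewrite {1}split_x; apply: le_lt_trans (ler_normD _ _) _.
  by apply: ltrD; [apply: hM | rewrite distrC; apply: hM].
by rewrite -splitr ltxx.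
Qed.

Lemma limit_sym_sim_diag n (I : finType) (M : I -> 'M[C]_n) :
  (forall eps : C, 0 < eps -> exists M' : I -> 'M[C]_n,
     [/\ forall i, (M' i)^T = M' i, sim_diag M' &
         forall i a b, `|M i a b - M' i a b| < eps]) ->
  (forall i, (M i)^T = M i) /\ approx_sim_diag M.
Proof.
move=> H; split => [i|eps e0].
  apply: sym_of_limit => eps e0.
  by have [M' [sym' _ close]] := H eps e0; exists (M' i).
by have [M' [_ diag' close]] := H eps e0; exists M'.
Qed.

End EntrywiseLimits.

Section SliceFamilies.
Variable C : numClosedFieldType.

Definition odiag_approximable n (I : Type) (S : I -> 'M[C]_n) : Prop :=
  forall d : C, 0 < d -> exists S' : I -> 'M[C]_n,
    odiag_family S' /\ forall k a b, `|S k a b - S' k a b| < d.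

Lemma odiag_approximable_tr n (I : Type) (S : I -> 'M[C]_n) :
  odiag_approximable S -> odiag_approximable (fun k => (S k)^T).
Proof.
move=> HS d d0; have [S' [odS' close]] := HS d d0.
exists (fun k => (S' k)^T); split; first exact: odiag_family_tr.
by move=> k a b; rewrite !mxE.
Qed.

Lemma approx_gram n (I : finType) (S : I -> 'M[C]_n) :
  odiag_approximable S ->
  (forall p, (gram S p)^T = gram S p) /\ approx_sim_diag (gram S).
Proof.
move=> HS; apply: limit_sym_sim_diag => eps e0.
pose K := \sum_(t : I * 'I_n * 'I_n) `|S t.1.1 t.1.2 t.2|.
have K0 : 0 <= K by apply: sumr_ge0.
have bound k a b : `|S k a b| <= K.
  exact: (norm_le_sum (fun t : I * 'I_n * 'I_n => S t.1.1 t.1.2 t.2) (k, a, b)).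
have c0 : 0 <= n%:R * (K * 2 + 1) by rewrite mulr_ge0 // addr_ge0 // mulr_ge0.
have [d [d0 d1 small]] := choose_tolerance c0 e0.
have [S' [odS' close]] := HS d d0.
have [sym' diag'] := odiag_gram_sym_sim_diag odS'.
exists (gram S'); split => // -[k l] a b.
apply: le_lt_trans (mulmx_close K0 (ltW d0) d1 _ _ _ _ a b) _ => //.
- by move=> i j; rewrite mxE.
- by move=> i j; rewrite !mxE.
- by rewrite mulrCA.
Qed.

(* A limit of orthogonally diagonal families has the slice property: apply
   the previous lemma to the family and to its transpose. *)
Lemma slices_property_of_approx n (S : 'I_n -> 'M[C]_n) :
  odiag_approximable S -> slices_property S.
Proof.
move=> HS.
have [sym1 diag1] := approx_gram HS.
have [sym2 diag2] := approx_gram (odiag_approximable_tr HS).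
split => [k l|//|k l|eps e0].
- exact: (sym1 (k, l)).
- by have := sym2 (k, l); rewrite /gram /= trmxK.
- have [B [diagB close]] := diag2 eps e0.
  by exists B; split => // p a b; have := close p a b; rewrite /gram trmxK.
Qed.

End SliceFamilies.

Section OTSlices.
Variable C : numClosedFieldType.
Variable n : nat.

Lemma sum_delta (F : 'I_n -> C) k :
  \sum_(k' < n) F k' * (delta_mx k 0 : 'cV[C]_n) k' 0 = F k.
Proof.
rewrite (bigD1 k) //= big1 => [|k' nk]; first by rewrite mxE !eqxx mulr1 addr0.
by rewrite mxE (negbTE nk) mulr0.
Qed.

(* Coefficients of a tensor in OT_n(C): T = sum_r alpha_r a_r (x) b_r (x) d_r,
   where a_r, b_r, d_r are the rows of the orthogonal matrices A, B, D. *)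
Lemma OT_coef (T : tensor C n) : OT T ->
  exists (A B D : 'M[C]_n) (alpha : 'I_n -> C),
   [/\ orthogonal_mx A, orthogonal_mx B, orthogonal_mx D &
    forall i j k, T i j k = \sum_(r < n) alpha r * A r i * B r j * D r k].
Proof.
move=> [A [B [D [alpha [HA HB HD Hform]]]]].
exists A, B, D, alpha; split => // i j k.
have col_delta (M : 'M[C]_n) i' r : (M *m (delta_mx i' 0 : 'cV[C]_n)) r 0 = M r i'.
  by rewrite -(colE i' M) mxE.
have := Hform (delta_mx i 0) (delta_mx j 0) (delta_mx k 0).
rewrite /trilin /diag_form.
under eq_bigr => i' _ do under eq_bigr => j' _ do rewrite sum_delta.
under eq_bigr => i' _ do rewrite sum_delta.
rewrite sum_delta => ->.
by apply: eq_bigr => r _; rewrite !col_delta.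
Qed.

Lemma OT_odiag_slices (T : tensor C n) : OT T ->
  [/\ odiag_family (xslice T), odiag_family (yslice T) & odiag_family (zslice T)].
Proof.
move=> /OT_coef [A [B [D [alpha [HA HB HD HT]]]]].
have slice_eq (P Q : 'M[C]_n) (S : 'I_n -> 'M[C]_n) (c : 'I_n -> 'I_n -> C) :
    (forall k a b, S k a b = \sum_r P r a * c k r * Q r b) ->
    forall k, S k = P^T *m diag_mx (\row_r c k r) *m Q.
  move=> HS k; apply/matrixP => a b; rewrite mul_mx_diag mxE HS.
  by apply: eq_bigr => r _; rewrite !mxE.
split.
- exists B, D, (fun k => \row_r (alpha r * A r k)); split => //.
  by apply: slice_eq => k a b; rewrite mxE HT; apply: eq_bigr => r _; ring.
- exists A, D, (fun k => \row_r (alpha r * B r k)); split => //.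
  by apply: slice_eq => k a b; rewrite mxE HT; apply: eq_bigr => r _; ring.
- exists A, B, (fun k => \row_r (alpha r * D r k)); split => //.
  by apply: slice_eq => k a b; rewrite mxE HT; apply: eq_bigr => r _; ring.
Qed.

Lemma OT_closure_slices (T : tensor C n) : OT_closure T ->
  [/\ odiag_approximable (xslice T), odiag_approximable (yslice T)
    & odiag_approximable (zslice T)].
Proof.
move=> HT; split => d d0; have [T' [/OT_odiag_slices[hx hy hz] close]] := HT d d0.
- by exists (xslice T'); split => // k a b; rewrite !mxE.
- by exists (yslice T'); split => // k a b; rewrite !mxE.
- by exists (zslice T'); split => // k a b; rewrite !mxE.
Qed.

End OTSlices.

Theorem proposition48 (C : numClosedFieldType) (n : nat) (T : tensor C n) :
  OT_closure T ->
  [/\ slices_property (xslice T), slices_property (yslice T)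
    & slices_property (zslice T)].
Proof.
move=> /OT_closure_slices [hx hy hz].
by split; apply: slices_property_of_approx.
Qed.
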